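(* Let $f\colon[n]\to\mathbb{R}$ and let $x<y<z$ be elements of $[n]$ such that $f$ is not convex on $\{x,y,z\}$, i.e. $\frac{f(y)-f(x)}{y-x}>\frac{f(z)-f(y)}{z-y}$. Then at least one of $x$, $y$, $z$ fails some triple test rooted at it whose height is at most $2\max\{y-x,\,z-y\}$.
   Context: $[n]=\{0,\dots,n-1\}$. For $a\in[n]$, a triple test rooted at $a$ is a (not necessarily sorted) triple $(a,b,c)$ such that $b\in\{2^k\lfloor\frac{a-1}{2^k}\rfloor,\ 2^k\lceil\frac{a+1}{2^k}\rceil\}$ for some integer $k$ with $1\le2^k<n$, and $c\in\{a+1,b+1\}$; the number $2^k$ is the height of the triple test, and $b$ is called a hub of $a$. The point $a$ fails the triple test if $f$ is not convex on $\{a,b,c\}$, where $f$ is convex on a set of three reals $u<v<w$ iff $\frac{f(v)-f(u)}{v-u}\le\frac{f(w)-f(v)}{w-v}$ (a set with fewer than three points is trivially convex). *)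

From mathcomp Require Import all_boot all_order all_algebra.
Set Implicit Arguments. Unset Strict Implicit. Unset Printing Implicit Defensive.
Import Order.TTheory GRing.Theory Num.Theory.
Local Open Scope ring_scope.

Definition slope (R : realFieldType) (f : nat -> R) (u v : nat) : R :=
  (f v - f u) / (v%:R - u%:R).

(* For a set of three points this is exactly the
   paper's definition; sets with fewer than three points are trivially convex. *)
Definition convex_on (R : realFieldType) (f : nat -> R) (S : seq nat) : Prop :=
  forall u v w : nat, u \in S -> v \in S -> w \in S ->
    (u < v)%N -> (v < w)%N -> slope f u v <= slope f v w.

(* b is a hub of a at height 2^k:
   b = 2^k * floor((a-1)/2^k)  (only meaningful/nonnegative when a >= 1; for a = 0
   this value is -2^k, outside [n]), or b = 2^k * ceil((a+1)/2^k),
   where ceil((a+1)/2^k) = floor((a+2^k)/2^k). *)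
Definition is_hub (k a b : nat) : Prop :=
  ((0 < a)%N /\ b = (2 ^ k * ((a - 1) %/ 2 ^ k))%N) \/
  b = (2 ^ k * ((a + 2 ^ k) %/ 2 ^ k))%N.

(* (a,b,c) is a triple test rooted at a of height 2^k in [n]
   (all three points must lie in [n] = {0,...,n-1}, the domain of f). *)
Definition triple_test (n a b c k : nat) : Prop :=
  [/\ (1 <= 2 ^ k < n)%N, is_hub k a b, (c = a.+1 \/ c = b.+1)
      & [/\ (a < n)%N, (b < n)%N & (c < n)%N]].

Definition fails_test (R : realFieldType) (n : nat) (f : nat -> R) (a k : nat) : Prop :=
  exists b c : nat, triple_test n a b c k /\ ~ convex_on f [:: a; b; c].

From mathcomp Require Import all_boot all_order all_algebra.
From mathcomp Require Import zify lra.
From Stdlib Require Import Classical.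
Import Order.TTheory GRing.Theory Num.Theory.

(* Suppose x, y and z pass every test of height at most 2 max(y - x, z - y),
   and let (u, v) be (x, y) or (y, z).  For a suitable height 2^i exactly one
   multiple m of 2^i lies strictly between u and v; it is then the upper hub of
   u and the lower hub of v at height 2^i, and the tests rooted at u and v with
   hub m give
     slope(u,u+1) <= slope(u,m) <= slope(m,m+1) <= slope(m,v) <= slope(v,v+1).
   By the three-chord lemma slope(u,u+1) <= slope(u,v) <= slope(v,v+1), hence
   slope(x,y) <= slope(y,y+1) <= slope(y,z). *)

Set Implicit Arguments.
Unset Strict Implicit.

Definition up_hub (k a : nat) : nat := 2 ^ k * ((a + 2 ^ k) %/ 2 ^ k).

Lemma is_hub_up_hub k a : is_hub k a (up_hub k a).
Proof. by right. Qed.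

Lemma up_hubE k a : up_hub k a = 2 ^ k * (a %/ 2 ^ k).+1.
Proof. by rewrite /up_hub divnDr ?dvdnn // divnn expn_gt0 addn1. Qed.

Lemma up_hub_gt k a : a < up_hub k a.
Proof. by rewrite up_hubE mulnC ltn_ceil ?expn_gt0. Qed.

Lemma up_hub_ge k a : 2 ^ k <= up_hub k a.
Proof. by rewrite up_hubE leq_pmulr. Qed.

Lemma up_hub_min k a m : 2 ^ k %| m -> a < m -> up_hub k a <= m.
Proof.
move=> /dvdnP [q ->] am; rewrite up_hubE mulnC leq_pmul2r ?expn_gt0 //.
by rewrite ltn_divLR ?expn_gt0.
Qed.

Lemma up_hubS_le k a : up_hub k.+1 a <= up_hub k a + 2 ^ k.
Proof.
rewrite [up_hub k a]up_hubE; set q := (a %/ 2 ^ k).+1.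
have gt_a : a < 2 ^ k * q by rewrite -up_hubE up_hub_gt.
have [/dvdnP [r eq_q] | odd_q] := boolP (2 %| q).
  apply: leq_trans (leq_addr _ _); apply: up_hub_min => //.
  by rewrite eq_q expnSr mulnCA dvdn_mull.
apply: up_hub_min; last exact: ltn_addr.
by move: odd_q; rewrite -mulnSr expnSr dvdn_pmul2l ?expn_gt0 // !dvdn2 oddS !negbK.
Qed.

Lemma is_hub_below k v m : 2 ^ k %| m -> m < v <= m + 2 ^ k -> is_hub k v m.
Proof.
move=> /dvdnP [q ->] /andP [mv vm]; left; split; first exact: leq_ltn_trans mv.
have lt_r : v.-1 - q * 2 ^ k < 2 ^ k by lia.
rewrite subn1 -(subnKC (_ : q * 2 ^ k <= v.-1)); last by lia.
by rewrite divnMDl ?expn_gt0 // divn_small // addn0 mulnC.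
Qed.

(* [up_hub i u] is the only multiple of [2 ^ i] strictly between [u] and [v];
   [i] is taken maximal with [up_hub i u < v]. *)
Lemma exists_common_hub u v K : u.+1 < v -> v - u <= 2 ^ K ->
  exists2 i, i <= K & up_hub i u < v <= up_hub i u + 2 ^ i.
Proof.
move=> uv vuK; pose P i := (i <= K) && (up_hub i u < v).
have P0 : P 0 by rewrite /P /up_hub expn0 divn1 mul1n addn1.
have P_le i : P i -> i <= K by case/andP.
case: (ex_maxnP (ex_intro P 0 P0) P_le) => i /andP [iK lt_v] max_i.
exists i; rewrite // lt_v /=; have [lt_iK | ge_iK] := ltnP i K.
  have : ~~ P i.+1 by apply/negP => /max_i; rewrite ltnn.
  rewrite /P lt_iK -leqNgt => /leq_trans; apply; exact: up_hubS_le.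
have -> : i = K by apply/eqP; rewrite eqn_leq iK.
by have := up_hub_gt K u; lia.
Qed.

Lemma exists_pow2_between d : 0 < d -> exists2 K, d <= 2 ^ K & 2 ^ K <= 2 * d.
Proof.
move=> d_gt0; have /andP [le_d lt_d] := trunc_log_bounds (isT : 1 < 2) d_gt0.
exists (trunc_log 2 d).+1; first exact: ltnW.
by rewrite expnS leq_mul2l.
Qed.

Local Open Scope ring_scope.

Section ThreeChord.
Variables (R : realFieldType) (f : nat -> R) (u v w : nat).
Hypotheses (lt_uv : (u < v)%N) (lt_vw : (v < w)%N).

Let gap (a b : nat) : R := b%:R - a%:R.

Let gap_gt0 {a b : nat} : (a < b)%N -> 0 < gap a b.
Proof. by move=> ab; rewrite subr_gt0 ltr_nat. Qed.

Let slope_split :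
  slope f u w * (gap u v + gap v w) =
  slope f u v * gap u v + slope f v w * gap v w.
Proof.
have -> : gap u v + gap v w = gap u w by rewrite /gap [LHS]addrC addrA subrK.
rewrite /slope /gap !mulfVK ?lt0r_neq0 ?gap_gt0 //; last exact: ltn_trans lt_vw.
by rewrite [RHS]addrC addrA subrK.
Qed.

Lemma slope_le_chord_l : slope f u v <= slope f v w -> slope f u v <= slope f u w.
Proof. by have := slope_split; have := gap_gt0 lt_uv; have := gap_gt0 lt_vw; nra. Qed.

Lemma slope_le_chord_r : slope f u v <= slope f v w -> slope f u w <= slope f v w.
Proof. by have := slope_split; have := gap_gt0 lt_uv; have := gap_gt0 lt_vw; nra. Qed.

End ThreeChord.

Section TripleTests.
Variables (R : realFieldType) (n : nat) (f : nat -> R) (B : nat).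

Definition passes_tests_upto (a : nat) : Prop :=
  forall k b c : nat, (2 ^ k <= B)%N -> triple_test n a b c k ->
    convex_on f [:: a; b; c].

Lemma passes_hub_above a b k : passes_tests_upto a -> (2 ^ k <= B)%N ->
  (2 ^ k < n)%N -> is_hub k a b -> (a < b)%N -> (b.+1 < n)%N ->
  slope f a a.+1 <= slope f a b /\ slope f a b <= slope f b b.+1.
Proof.
move=> pass_a kB kn hub ab bn.
have convex_at c : c = a.+1 \/ c = b.+1 -> convex_on f [:: a; b; c].
  move=> c_eq; apply: pass_a kB _; split; rewrite ?expn_gt0 //.
  by split; lia.
split; last by apply: (convex_at _ (or_intror erefl)); rewrite ?inE ?eqxx ?orbT.
have [ab1 | ba1] := ltnP a.+1 b; last by have -> : b = a.+1 by lia.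
apply: slope_le_chord_l => //.
by apply: (convex_at _ (or_introl erefl)); rewrite ?inE ?eqxx ?orbT.
Qed.

Lemma passes_hub_below v b k : passes_tests_upto v -> (2 ^ k <= B)%N ->
  (2 ^ k < n)%N -> is_hub k v b -> (b < v)%N -> (v < n)%N ->
  slope f b b.+1 <= slope f b v /\ ((v.+1 < n)%N -> slope f b v <= slope f v v.+1).
Proof.
move=> pass_v kB kn hub bv vn.
have convex_at c : c = v.+1 \/ c = b.+1 -> (c < n)%N -> convex_on f [:: v; b; c].
  move=> c_eq cn; apply: pass_v kB _; split; rewrite ?expn_gt0 //.
  by split; lia.
split=> [|vn1]; last by apply: (convex_at _ (or_introl erefl)); rewrite ?inE ?eqxx ?orbT.
have [bv1 | vb1] := ltnP b.+1 v; last by have -> : v = b.+1 by lia.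
apply: slope_le_chord_l => //.
by apply: (convex_at _ (or_intror erefl)); rewrite ?inE ?eqxx ?orbT //; lia.
Qed.

Lemma passes_slope_bounds u v K :
  passes_tests_upto u -> passes_tests_upto v -> (u < v)%N -> (v < n)%N ->
  (v - u <= 2 ^ K)%N -> (2 ^ K <= B)%N ->
  slope f u u.+1 <= slope f u v /\ ((v.+1 < n)%N -> slope f u v <= slope f v v.+1).
Proof.
move=> pass_u pass_v uv vn vuK KB.
have [uv1 | vu1] := ltnP u.+1 v; last first.
  have eq_v : v = u.+1 by lia.
  subst v.
  split=> // un2; have hub : is_hub 0 u.+1 u by apply: is_hub_below; rewrite ?dvd1n; lia.
  have oneB : (2 ^ 0 <= B)%N by apply: leq_trans KB; rewrite expn_gt0.
  by case: (passes_hub_below pass_v oneB _ hub) => //; lia.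
have [i iK m_between] := exists_common_hub uv1 vuK.
set m := up_hub i u in m_between; have /andP [mv vm] := m_between.
have iB : (2 ^ i <= B)%N by apply: leq_trans KB; rewrite leq_pexp2l.
have i_n : (2 ^ i < n)%N by have := up_hub_ge i u; lia.
have [u_um um_m] : slope f u u.+1 <= slope f u m /\ slope f u m <= slope f m m.+1.
  by apply: passes_hub_above (is_hub_up_hub i u) (up_hub_gt i u) _ => //; lia.
have [m_mv mv_v] := passes_hub_below pass_v iB i_n
  (is_hub_below (dvdn_mulr _ (dvdnn _)) m_between) mv vn.
have um_mv : slope f u m <= slope f m v := le_trans um_m m_mv.
have um := up_hub_gt i u.
split=> [|vn1]; first exact: le_trans u_um (slope_le_chord_l um mv um_mv).
exact: le_trans (slope_le_chord_r um mv um_mv) (mv_v vn1).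
Qed.

End TripleTests.

Unset Implicit Arguments.

Theorem lemma3p3 (R : realFieldType) (n : nat) (f : nat -> R) (x y z : nat) :
  (x < y)%N -> (y < z)%N -> (z < n)%N ->
  slope f x y > slope f y z ->
  exists a k : nat,
    a \in [:: x; y; z] /\ (2 ^ k <= 2 * maxn (y - x) (z - y))%N /\ fails_test n f a k.
Proof.
move=> xy yz zn slope_gt; apply: NNPP => none_fails.
set d := maxn (y - x) (z - y) in none_fails.
have [K dK Kd] : exists2 K, (d <= 2 ^ K)%N & (2 ^ K <= 2 * d)%N.
  by apply: exists_pow2_between; rewrite leq_max !subn_gt0 xy.
have pass a : a \in [:: x; y; z] -> passes_tests_upto n f (2 * d) a.
  move=> a_xyz k b c kd test; apply: NNPP => not_convex; apply: none_fails.
  by exists a, k; split=> //; split=> //; exists b, c.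
have [px py pz] : [/\ x \in [:: x; y; z], y \in [:: x; y; z] & z \in [:: x; y; z]].
  by rewrite !inE !eqxx !orbT.
have [_ xy_y] := passes_slope_bounds (pass x px) (pass y py) xy (ltn_trans yz zn)
  (leq_trans (leq_maxl _ _) dK) Kd.
have [y_yz _] := passes_slope_bounds (pass y py) (pass z pz) yz zn
  (leq_trans (leq_maxr _ _) dK) Kd.
by move: slope_gt; rewrite ltNge (le_trans (xy_y (leq_ltn_trans yz zn)) y_yz).
Qed.
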